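(* For integers $r\ge 3$ and $n \ge \frac{(r-1)(2r+1)}{2}$, $$\mathrm{co}^{+}\mathrm{ex}(n,\mathrm{T}_r)=\left\lfloor \frac{n}{r}\right\rfloor,$$ where $\mathrm{co}^{+}\mathrm{ex}(n,\mathrm{T}_r)$ is the maximum of $\delta_{r-1}^{+}(\mathcal{H})$ over all $n$-vertex $\mathrm{T}_r$-free $r$-graphs $\mathcal{H}$.
   Context: An $r$-graph $\mathcal{H}$ is a collection of $r$-subsets (edges) of a finite vertex set $V(\mathcal{H})$. The shadow is $\partial\mathcal{H}=\{e\in\binom{V(\mathcal{H})}{r-1}\colon e\subseteq E \text{ for some } E\in\mathcal{H}\}$. For $e\in\partial\mathcal{H}$, $N_{\mathcal{H}}(e)=\{v\in V(\mathcal{H})\colon e\cup\{v\}\in\mathcal{H}\}$. The minimum positive codegree is $\delta_{r-1}^{+}(\mathcal{H})=\min\{|N_{\mathcal{H}}(e)|\colon e\in\partial\mathcal{H}\}$ (for the empty $r$-graph take this to be $0$). The $r$-uniform generalized triangle is $\mathrm{T}_r=\{\{1,\ldots,r-1,r\},\{1,\ldots,r-1,r+1\},\{r,r+1,\ldots,2r-1\}\}$; $\mathcal{H}$ is $\mathrm{T}_r$-free if it contains no subhypergraph isomorphic to $\mathrm{T}_r$. *)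

From mathcomp Require Import all_boot.
Set Implicit Arguments. Unset Strict Implicit. Unset Printing Implicit Defensive.

Definition rgraph (n r : nat) (H : {set {set 'I_n}}) : bool :=
  [forall E in H, #|E| == r].

Definition shadow (n r : nat) (H : {set {set 'I_n}}) : {set {set 'I_n}} :=
  [set e : {set 'I_n} | (#|e| == r.-1) && [exists E in H, e \subset E]].

Definition nbhd (n : nat) (H : {set {set 'I_n}}) (e : {set 'I_n}) : {set 'I_n} :=
  [set v : 'I_n | (v |: e) \in H].

(* Minimum positive codegree; 0 for the empty r-graph.  For nonempty H the
   shadow is nonempty, and every value #|nbhd H e| is <= n, so the initial
   value n of the min does not affect the result. *)
Definition minposcodeg (n r : nat) (H : {set {set 'I_n}}) : nat :=
  if H == set0 then 0
  else \big[minn/n]_(e in shadow r H) #|nbhd H e|.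

(* The generalized triangle T_r on vertex set 'I_(2r-1) (0-based):
   {0..r-2, r-1}, {0..r-2, r}, {r-1,..,2r-2}. *)
Definition Tr_edge1 (r : nat) : {set 'I_(2 * r - 1)} := [set i : 'I_(2 * r - 1) | i < r].
Definition Tr_edge2 (r : nat) : {set 'I_(2 * r - 1)} :=
  [set i : 'I_(2 * r - 1) | (i < r - 1) || (nat_of_ord i == r)].
Definition Tr_edge3 (r : nat) : {set 'I_(2 * r - 1)} := [set i : 'I_(2 * r - 1) | r - 1 <= i].

Definition contains_Tr (n r : nat) (H : {set {set 'I_n}}) : bool :=
  [exists f : {ffun 'I_(2 * r - 1) -> 'I_n},
    [&& injectiveb f, f @: Tr_edge1 r \in H, f @: Tr_edge2 r \in H
      & f @: Tr_edge3 r \in H]].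

Definition Tr_free (n r : nat) (H : {set {set 'I_n}}) : bool :=
  ~~ contains_Tr r H.

Definition copex (n r : nat) : nat :=
  \max_(H : {set {set 'I_n}} | rgraph r H && Tr_free r H)
     minposcodeg r H.

From HB Require Import structures.
From Pilot Require Import Defs.
From mathcomp Require Import all_boot zify.
Set Implicit Arguments. Unset Strict Implicit. Unset Printing Implicit Defensive.

(* Fix an edge F.  If the neighbourhoods of the (r-1)-sets F - x
   (x in F) are pairwise disjoint, then r times the minimum positive codegree is
   at most n.  Otherwise some v extends both F - x and F - y, so two edges
   x + A and y + A share an (r-1)-set A.  Among the edges through x and y take
   one, G, meeting W = A + x + y least.  If G misses A we have a copy of T_r;
   otherwise, for w in G and A, minimality forces every neighbour of G - w into
   W - (G - w), a set of at most r - 1 <= n/r vertices.  The complete r-partite r-graph on blocks of size >= n/r is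
   T_r-free (two edges sharing r - 1 vertices end in the same block, which the
   third edge of T_r forbids), and an (r-1)-set of its shadow extends by every
   vertex of the one block it misses. *)

(* minn has no unit on nat, but being associative and commutative suffices for bigD1. *)
HB.instance Definition _ := SemiGroup.isComLaw.Build nat minn minnA minnC.

Lemma card_bigcup_disjoint (I T : finType) (D : {pred I}) (S : I -> {set T}) :
  {in D &, forall i j, i != j -> [disjoint S i & S j]} ->
  #|\bigcup_(i in D) S i| = \sum_(i in D) #|S i|.
Proof.
move=> disjS; pose S' i := if i \in D then S i else set0.
have disjS' i j : i != j -> [disjoint S' i & S' j].
  rewrite /S'; case: ifP => iD; case: ifP => jD ij; last 3 first.
  - by rewrite -setI_eq0 setI0.
  - by rewrite -setI_eq0 set0I.
  - by rewrite -setI_eq0 set0I.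
  exact: disjS.
rewrite big_mkcond -sum1_card (partition_disjoint_bigcup _ _ disjS') [RHS]big_mkcond.
apply: eq_bigr => i _; rewrite /S'; case: ifP => _; first exact: sum1_card.
exact: big_set0.
Qed.

Lemma mem_imset_nth (T : finType) (x0 : T) (s : seq T) m (P : pred nat) u :
  uniq s -> size s = m ->
  (u \in [ffun i : 'I_m => nth x0 s i] @: [set i : 'I_m | P i]) =
  (u \in s) && P (index u s).
Proof.
move=> s_uniq s_size; apply/imsetP/andP => [[i] | [us Pu]].
  by rewrite ffunE inE => Pi ->; rewrite mem_nth ?index_uniq ?s_size.
have lt_us : index u s < m by rewrite -s_size index_mem.
by exists (Ordinal lt_us); rewrite ?inE // ffunE nth_index.
Qed.

Lemma index_cat_ltn (T : eqType) (s1 s2 : seq T) u :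
  (index u (s1 ++ s2) < size s1) = (u \in s1).
Proof. by rewrite index_cat; case: ifP => u_s1; rewrite ?index_mem // ltnNge leq_addr. Qed.

Lemma index_cat_geq (T : eqType) (s1 s2 : seq T) u : uniq (s1 ++ s2) ->
  (u \in s1 ++ s2) && (size s1 <= index u (s1 ++ s2)) = (u \in s2).
Proof.
rewrite mem_cat leqNgt index_cat_ltn cat_uniq => /and3P [_ /hasPn s2_notin_s1 _].
case: (boolP (u \in s1)) => [u_s1 | _]; last by rewrite andbT.
by apply/esym/negbTE; apply: contraL u_s1 => /s2_notin_s1.
Qed.

Section Codegree.
Variables (n r : nat) (H : {set {set 'I_n}}).

Lemma minposcodeg_le e : e \in shadow r H -> minposcodeg r H <= #|nbhd H e|.
Proof.
move=> sh_e; have /set0Pn-/negbTE H_ne0 : exists E, E \in H.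
  by case/setIdP: sh_e => _ /existsP [E /andP [HE _]]; exists E.
by rewrite /minposcodeg H_ne0 (bigD1 e) //= geq_minl.
Qed.

Lemma leq_minposcodeg q : H != set0 -> q <= n ->
  (forall e, e \in shadow r H -> q <= #|nbhd H e|) -> q <= minposcodeg r H.
Proof.
move=> /negbTE H_ne0 q_le_n q_le; rewrite /minposcodeg H_ne0.
by elim/big_ind: _ => // a b; rewrite leq_min => -> ->.
Qed.

Hypothesis H_rgraph : Defs.rgraph r H.

Lemma card_edge E : E \in H -> #|E| = r.
Proof. by move=> HE; apply/eqP; move/forallP/(_ E): H_rgraph; rewrite HE. Qed.

Lemma setD1_shadow E w : E \in H -> w \in E -> E :\ w \in shadow r H.
Proof.
move=> HE wE; rewrite inE -(card_edge HE) (cardsD1 w E) wE eqxx /=.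
by apply/existsP; exists E; rewrite HE subsetDl.
Qed.

Lemma nbhd_notin (e : {set 'I_n}) v : 0 < r -> #|e| = r.-1 -> v \in nbhd H e -> v \notin e.
Proof.
move=> r_gt0 card_e; rewrite inE => /card_edge; rewrite cardsU1 card_e.
by case: (v \in e) => //=; lia.
Qed.

End Codegree.

Section TriangleShape.
Variables (r : nat).
Hypothesis r_gt1 : 1 < r.

Definition Tr_low : {set 'I_(2 * r - 1)} := [set i : 'I_(2 * r - 1) | i < r.-1].
Definition Tr_high : {set 'I_(2 * r - 1)} := [set i : 'I_(2 * r - 1) | r < i].
Fact Tr_apex1_subproof : r.-1 < 2 * r - 1. Proof. lia. Qed.
Fact Tr_apex2_subproof : r < 2 * r - 1. Proof. lia. Qed.
Definition Tr_apex1 : 'I_(2 * r - 1) := Ordinal Tr_apex1_subproof.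
Definition Tr_apex2 : 'I_(2 * r - 1) := Ordinal Tr_apex2_subproof.

Lemma Tr_edge1E : Tr_edge1 r = Tr_apex1 |: Tr_low.
Proof. by apply/setP => i; rewrite !inE -val_eqE /=; lia. Qed.

Lemma Tr_edge2E : Tr_edge2 r = Tr_apex2 |: Tr_low.
Proof. by apply/setP => i; rewrite !inE -val_eqE /=; lia. Qed.

Lemma Tr_edge3E : Tr_edge3 r = Tr_apex1 |: (Tr_apex2 |: Tr_high).
Proof. by apply/setP => i; rewrite !inE -!val_eqE /=; lia. Qed.

End TriangleShape.

Lemma contains_Tr_intro n r (H : {set {set 'I_n}}) (A G : {set 'I_n}) x y :
  1 < r -> #|A| = r.-1 -> #|G| = r -> x != y -> x \in G -> y \in G ->
  [disjoint A & G] -> x |: A \in H -> y |: A \in H -> G \in H ->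
  contains_Tr r H.
Proof.
move=> r_gt1 card_A card_G xy xG yG dAG HxA HyA HG.
set C := G :\ x :\ y.
have xA : x \notin A by rewrite (disjointFl dAG).
have yA : y \notin A by rewrite (disjointFl dAG).
have dAC : [disjoint A & C].
  by apply: disjointWr dAG; apply/subsetP => u; rewrite !inE => /and3P [_ _ ->].
have xC : x \notin C by rewrite !inE eqxx andbF.
have yC : y \notin C by rewrite !inE eqxx.
have card_C : #|C| = r - 2.
  have yGx : y \in G :\ x by rewrite !inE yG eq_sym xy.
  move: (cardsD1 x G) (cardsD1 y (G :\ x)); rewrite xG yGx card_G => e1 e2.
  by rewrite /C; clear -e1 e2; lia.
set s := enum A ++ x :: y :: enum C.
have s_size : size s = 2 * r - 1.
  by rewrite size_cat /= -!cardE card_A card_C; clear -r_gt1; lia.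
have s_uniq : uniq s.
  rewrite cat_uniq !enum_uniq /= !mem_enum in_cons mem_enum.
  rewrite (negbTE xA) (negbTE yA) (negbTE xC) yC (negbTE xy) enum_uniq /= andbT.
  by apply/hasPn => u; rewrite !mem_enum => uC; rewrite (disjointFl dAC uC).
pose f := [ffun i : 'I_(2 * r - 1) => nth x s i].
have mem_f (P : pred nat) u :
    (u \in f @: [set i : 'I_(2 * r - 1) | P i]) = (u \in s) && P (index u s).
  exact: mem_imset_nth.
have s_size_low : size (enum A) = r.-1 by rewrite -cardE.
have fA : f @: Tr_low r = A.
  apply/setP => u; rewrite (mem_f (fun k => k < r.-1)) -s_size_low index_cat_ltn.
  by rewrite mem_enum andb_idl // => uA; rewrite mem_cat mem_enum uA.
have fC : f @: Tr_high r = C.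
  have s_split : s = (enum A ++ [:: x; y]) ++ enum C by rewrite -catA.
  have size_xy : size (enum A ++ [:: x; y]) = r.+1.
    by rewrite size_cat s_size_low /=; clear -r_gt1; lia.
  apply/setP => u; rewrite (mem_f (fun k => r < k)) /= s_split -size_xy.
  by rewrite index_cat_geq -?s_split // mem_enum.
have fx : f (Tr_apex1 r_gt1) = x by rewrite ffunE /= nth_cat s_size_low ltnn subnn.
have fy : f (Tr_apex2 r_gt1) = y.
  rewrite ffunE /= nth_cat s_size_low ltnNge leq_pred /=.
  by have -> : r - r.-1 = 1 by clear -r_gt1; lia.
apply/existsP; exists f; apply/and4P; split.
- apply/injectiveP => i j; rewrite !ffunE => /eqP.
  by rewrite nth_uniq ?s_size // => /eqP /val_inj.
- by rewrite (Tr_edge1E r_gt1) imsetU1 fx fA.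
- by rewrite (Tr_edge2E r_gt1) imsetU1 fy fA.
- by rewrite (Tr_edge3E r_gt1) !imsetU1 fx fy fC !setD1K // !inE yG eq_sym xy.
Qed.

Section Transversals.
Variables (n k : nat) (p : 'I_n -> 'I_k).

Definition transversals : {set {set 'I_n}} :=
  [set E : {set 'I_n} | (#|E| == k) && (#|p @: E| == k)].

Lemma transversalP (E : {set 'I_n}) :
  reflect (#|E| = k /\ {in E &, injective p}) (E \in transversals).
Proof.
rewrite inE; apply: (iffP andP) => [[/eqP card_E] | [card_E inj_p]].
  by move=> /eqP card_pE; split=> //; apply/imset_injP; rewrite card_pE card_E.
by rewrite card_in_imset // card_E.
Qed.

Lemma transversal_image (E : {set 'I_n}) : E \in transversals -> p @: E = setT.
Proof.
case/transversalP => card_E inj_p; apply/eqP.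
rewrite eqEcard subsetT cardsT card_ord (card_in_imset inj_p).
by rewrite card_E leqnn.
Qed.

Lemma transversals_rgraph : Defs.rgraph k transversals.
Proof. by apply/forallP => E; apply/implyP => /transversalP [-> _]. Qed.

Hypothesis k_gt1 : 1 < k.

Lemma transversals_Tr_free : Tr_free k transversals.
Proof.
apply/negP => /existsP [f /and4P [/injectiveP inj_f E1 E2 E3]].
move: E1 E2 E3; rewrite (Tr_edge1E k_gt1) (Tr_edge2E k_gt1) (Tr_edge3E k_gt1).
set a := Tr_apex1 k_gt1; set b := Tr_apex2 k_gt1; set L := Tr_low k.
move=> E1 /transversalP [_ inj2] /transversalP [_ inj3].
have a_neq_b : a != b by rewrite -val_eqE /= neq_ltn ltn_predL (ltnW k_gt1).
have b_notin_L : b \notin L by rewrite inE -leqNgt leq_pred.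
have : p (f b) \in p @: (f @: (a |: L)) by rewrite (transversal_image E1) inE.
case/imsetP => _ /imsetP [c c_aL ->] pb_pc.
have c_eq_a : c = a.
  case/setU1P: c_aL => // c_L.
  have /inj_f b_eq_c : f b = f c by apply: inj2; rewrite ?imset_f ?setU11 ?setU1r.
  by move: b_notin_L; rewrite b_eq_c c_L.
have /inj_f b_eq_a : f b = f a.
  by move: pb_pc; rewrite c_eq_a; apply: inj3; rewrite imset_f // !inE eqxx ?orbT.
by rewrite b_eq_a eqxx in a_neq_b.
Qed.

Lemma transversals_minposcodeg q :
  (forall j, q <= #|p @^-1: [set j]|) -> q <= minposcodeg k transversals.
Proof.
move=> q_le_class; have [-> // | q_gt0] := posnP q.
have /fin_all_exists [g pgK] : forall j : 'I_k, exists i, p i = j.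
  move=> j; have /card_gt0P [i] := leq_trans q_gt0 (q_le_class j).
  by rewrite !inE => /eqP; exists i.
have k_pred_lt : k.-1 < k by rewrite prednK // ltnW.
apply: leq_minposcodeg.
- apply/set0Pn; exists (g @: setT); apply/transversalP; split.
    by rewrite card_imset ?cardsT ?card_ord //; apply: can_inj pgK.
  by move=> _ _ /imsetP [j _ ->] /imsetP [j' _ ->]; rewrite !pgK => ->.
- apply: leq_trans (q_le_class (Ordinal (ltnW k_gt1))) _.
  exact: leq_trans (max_card _) (eq_leq (card_ord n)).
move=> e /setIdP [/eqP card_e /existsP [E /andP [/transversalP [_ inj_E] eE]]].
have inj_e : {in e &, injective p} by apply: sub_in2 inj_E; apply/subsetP.
have [j _ j_notin] : exists2 j, j \in setT & j \notin p @: e.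
  apply/subsetPn; apply/negP => /subset_leq_card.
  by rewrite cardsT card_ord card_in_imset // card_e leqNgt k_pred_lt.
apply: (leq_trans (q_le_class j)); apply: subset_leq_card; apply/subsetP => i.
rewrite !inE => /eqP pi.
have i_notin_e : i \notin e by apply: contra j_notin => ie; rewrite -pi imset_f.
rewrite imsetU1 !cardsU1 i_notin_e pi (negbTE j_notin) card_in_imset // card_e.
by rewrite add1n prednK ?eqxx // ltnW.
Qed.

End Transversals.

Section Blocks.
Variables (n k : nat).
Hypothesis k_gt0 : 0 < k.

(* Block i %/ (n %/ k), except that the last block absorbs the remainder n %% k. *)
Fact block_subproof (i : 'I_n) : minn (i %/ (n %/ k)) k.-1 < k.
Proof. by rewrite (leq_ltn_trans (geq_minr _ _)) // ltn_predL. Qed.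

Definition block (i : 'I_n) : 'I_k := Ordinal (block_subproof i).

Lemma block_class j : n %/ k <= #|block @^-1: [set j]|.
Proof.
set q := n %/ k; have [-> // | q_gt0] := posnP q.
have lt_n (t : 'I_q) : j * q + t < n.
  have := ltn_ord j; have := ltn_ord t; have := leq_divM n k.
  rewrite -/q; clear; nia.
pose g t := Ordinal (lt_n t).
have g_inj : injective g by move=> t t' /(congr1 val) /= /addnI /val_inj.
apply: (@leq_trans #|g @: setT|); first by rewrite card_imset // cardsT card_ord.
apply: subset_leq_card; apply/subsetP => _ /imsetP [t _ ->]; rewrite !inE.
apply/eqP/val_inj => /=; rewrite divnMDl // divn_small // addn0.
by apply/minn_idPl; rewrite -ltnS prednK.
Qed.

End Blocks.

Section UpperBound.
Variables (n r : nat) (H : {set {set 'I_n}}).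
Hypotheses (r_gt1 : 1 < r) (H_rgraph : Defs.rgraph r H) (H_Tr_free : Tr_free r H).

Let r_gt0 : 0 < r. Proof. exact: ltnW. Qed.

Lemma minposcodeg_le_two_edges (A G0 : {set 'I_n}) x y :
  #|A| = r.-1 -> x != y -> x \notin A -> y \notin A ->
  x |: A \in H -> y |: A \in H -> G0 \in H -> x \in G0 -> y \in G0 ->
  minposcodeg r H <= r.-1.
Proof.
move=> card_A xy xA yA HxA HyA HG0 xG0 yG0; set W := x |: (y |: A).
pose meets m := [exists G in H, [&& x \in G, y \in G & #|G :&: W| == m]].
have ex_meets : exists m, meets m.
  by exists #|G0 :&: W|; apply/existsP; exists G0; rewrite HG0 xG0 yG0 eqxx.
case: (ex_minnP ex_meets) => _ /existsP [G /and4P [HG xG yG /eqP <-]] G_min.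
have [dAG | ] := boolP [disjoint A & G].
  case/negP: H_Tr_free.
  exact: contains_Tr_intro r_gt1 card_A (card_edge H_rgraph HG) xy xG yG dAG HxA HyA HG.
rewrite -setI_eq0 => /set0Pn [w /setIP [wA wG]].
set B := G :\ w.
have card_B : #|B| = r.-1.
  by move: (cardsD1 w G); rewrite wG (card_edge H_rgraph HG) add1n => ->.
have wx : w != x by apply: contraNneq xA => <-.
have wy : w != y by apply: contraNneq yA => <-.
have xB : x \in B by rewrite !inE eq_sym wx.
have yB : y \in B by rewrite !inE eq_sym wy.
have nbhd_sub : nbhd H B \subset W :\: B.
  apply/subsetP => z z_nbhd; rewrite inE (nbhd_notin H_rgraph r_gt0 card_B z_nbhd) /=.
  apply/negPn/negP => zW.
  have : meets #|B :&: W|.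
    apply/existsP; exists (z |: B); move: z_nbhd; rewrite inE => -> /=.
    rewrite !in_setU1 xB yB !orbT /=; apply/eqP/eq_card => u.
    move: zW; rewrite !inE => /negbTE zW.
    by case: (eqVneq u z) => [-> | _]; rewrite ?zW ?andbF.
  move/G_min; apply/negP; rewrite -ltnNge.
  have wGW : w \in G :&: W by rewrite inE wG !inE wA !orbT.
  rewrite (cardsD1 w (G :&: W)) wGW add1n ltnS.
  by apply/subset_leq_card/subsetP => u; rewrite !inE => /andP [/andP [-> ->] ->].
have card_W : #|W| = r.+1.
  by rewrite !cardsU1 !inE (negbTE xy) (negbTE xA) yA card_A /=; clear -r_gt1; lia.
have card_WB : 2 <= #|W :&: B|.
  have <- : #|[set x; y]| = 2 by rewrite cards2 xy.
  apply/subset_leq_card/subsetP => u.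
  by rewrite !in_set2 => /orP [] /eqP ->; rewrite inE ?xB ?yB !in_setU1 eqxx ?orbT.
apply: leq_trans (minposcodeg_le (setD1_shadow H_rgraph HG wG)) _.
apply: leq_trans (subset_leq_card nbhd_sub) _.
by rewrite cardsD card_W; move: card_WB; clear; lia.
Qed.

Lemma minposcodeg_le_shared_nbhd F x y v :
  F \in H -> x \in F -> y \in F -> x != y ->
  v \in nbhd H (F :\ x) -> v \in nbhd H (F :\ y) -> minposcodeg r H <= r.-1.
Proof.
move=> HF xF yF xy vx vy; have card_F := card_edge H_rgraph HF.
have card_FD1 z : z \in F -> #|F :\ z| = r.-1.
  by move=> zF; move: (cardsD1 z F); rewrite zF card_F add1n => ->.
have /negbTE v_Fx := nbhd_notin H_rgraph r_gt0 (card_FD1 x xF) vx.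
have /negbTE v_Fy := nbhd_notin H_rgraph r_gt0 (card_FD1 y yF) vy.
have vF : v \notin F.
  apply: contra xy => vF; move: v_Fx v_Fy; rewrite !inE vF !andbT.
  by move=> /negbFE /eqP <- /negbFE /eqP <-.
set A := v |: (F :\ x :\ y).
have xA : x \notin A by rewrite !inE eqxx andbF orbF; apply: contraNneq vF => <-.
have yA : y \notin A by rewrite !inE eqxx /= orbF; apply: contraNneq vF => <-.
have card_A : #|A| = r.-1.
  have yFx : y \in F :\ x by rewrite !inE yF eq_sym xy.
  move: (cardsD1 y (F :\ x)); rewrite yFx card_FD1 // cardsU1 !inE (negbTE vF) !andbF.
  by clear -r_gt1; lia.
apply: (minposcodeg_le_two_edges card_A xy xA yA _ _ HF xF yF).
- suff -> : x |: A = v |: (F :\ y) by rewrite inE in vy.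
  apply/setP => u; rewrite !inE.
  by case: (eqVneq u x) => [-> | //]; rewrite xF xy orbT.
- suff -> : y |: A = v |: (F :\ x) by rewrite inE in vx.
  apply/setP => u; rewrite !inE.
  by case: (eqVneq u y) => [-> | //]; rewrite yF (eq_sym y x) xy orbT.
Qed.

Lemma disjoint_links_bound F : F \in H ->
  {in F &, forall x y, x != y -> [disjoint nbhd H (F :\ x) & nbhd H (F :\ y)]} ->
  r * minposcodeg r H <= n.
Proof.
move=> HF disj_links; rewrite -[X in X * _](card_edge H_rgraph HF) -sum_nat_const.
apply: (@leq_trans (\sum_(x in F) #|nbhd H (F :\ x)|)).
  by apply: leq_sum => x xF; apply: minposcodeg_le (setD1_shadow H_rgraph HF xF).
rewrite -card_bigcup_disjoint //.
exact: leq_trans (max_card _) (eq_leq (card_ord n)).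
Qed.

Lemma minposcodeg_Tr_free_le : r * r.-1 <= n -> minposcodeg r H <= n %/ r.
Proof.
move=> n_large; have [-> | /set0Pn [F HF]] := eqVneq H set0.
  by rewrite /minposcodeg eqxx.
rewrite leq_divRL // mulnC.
have [/existsP [x /andP [xF /existsP [y /and3P [yF xy]]]] | no_shared] :=
  boolP [exists x in F, exists y in F,
           (x != y) && ~~ [disjoint nbhd H (F :\ x) & nbhd H (F :\ y)]].
  rewrite -setI_eq0 => /set0Pn [v /setIP [vx vy]].
  apply: leq_trans n_large; rewrite leq_mul2l.
  by rewrite (minposcodeg_le_shared_nbhd HF xF yF xy vx vy) orbT.
apply: (disjoint_links_bound HF) => x y xF yF xy; apply/negPn/negP => shared.
case/negP: no_shared; apply/existsP; exists x; rewrite xF.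
by apply/existsP; exists y; rewrite yF xy.
Qed.

End UpperBound.

Theorem corollary1p3 (r n : nat) :
  3 <= r -> (r - 1) * (2 * r + 1) <= 2 * n ->
  copex n r = n %/ r.
Proof.
move=> r_ge3 n_large; have r_gt1 : 1 < r by apply: leq_trans r_ge3.
apply/eqP; rewrite eqn_leq; apply/andP; split.
  apply/bigmax_leqP => H /andP [H_rgraph H_Tr_free].
  by apply: minposcodeg_Tr_free_le => //; clear -r_ge3 n_large; nia.
apply: leq_trans (transversals_minposcodeg r_gt1 (@block_class n r (ltnW r_gt1))) _.
by apply: leq_bigmax_cond; rewrite transversals_rgraph transversals_Tr_free.
Qed.
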